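(* Let $\mathcal{X}=(X,dX)$ be a directed space. On the set of traces of $\mathcal{X}$, define $f\leq g$ if and only if there exist traces $u,v$ with $g=u\star f\star v$. Then $\leq$ is a preorder. If moreover $\mathcal{X}$ is a pospace (with its increasing paths as dipaths), then $\leq$ is a partial order.
   Context: A directed space $\mathcal{X}=(X,dX)$ is a topological space $X$ with a set $dX$ of continuous paths $[0,1]\to X$ (dipaths) containing constant paths, closed under monotone reparametrization and under concatenation. A trace is the equivalence class of a dipath modulo monotone reparametrization, and concatenation $\star$ of (composable) traces is induced by concatenation of dipaths. A pospace is a Hausdorff space $X$ with a partial order $\leq_X$ that is closed in $X\times X$; it is regarded as a directed space whose dipaths are the continuous order-preserving maps $[0,1]\to X$ ($[0,1]$ with its usual order). *)

From HB Require Import structures.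
From mathcomp Require Import all_boot all_order all_algebra.
From mathcomp Require Import all_classical all_reals all_analysis.
From Stdlib Require Import Relations.
Set Implicit Arguments. Unset Strict Implicit. Unset Printing Implicit Defensive.
Import Order.TTheory GRing.Theory Num.Theory numFieldNormedType.Exports.
Local Open Scope classical_set_scope.
Local Open Scope ring_scope.

Section DirectedSpaces.
Variable R : realType.

(* Paths are maps R -> X of which only the restriction to [0,1] matters. *)
Definition I01 : set R := `[0, 1].

Definition is_path (X : topologicalType) (p : R -> X) : Prop :=
  {within I01, continuous p}.

Definition reparam (phi : R -> R) : Prop :=
  {within I01, continuous phi} /\
  (forall s t, I01 s -> I01 t -> s <= t -> phi s <= phi t) /\
  phi @` I01 = I01.

Definition concat (X : Type) (p q : R -> X) : R -> X :=
  fun t => if t <= 2^-1 then p (2 * t) else q (2 * t - 1).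

Record dspace (X : topologicalType) (dX : set (R -> X)) : Prop := {
  ds_path : forall p, dX p -> is_path p;
  ds_const : forall x : X, dX (fun _ => x);
  ds_reparam : forall p phi, dX p -> reparam phi -> dX (p \o phi);
  ds_concat : forall p q, dX p -> dX q -> p 1 = q 0 -> dX (concat p q) }.

Definition reparam_step (X : Type) (p q : R -> X) : Prop :=
  exists phi, reparam phi /\ forall t, I01 t -> q t = p (phi t).

Definition same_trace (X : Type) : relation (R -> X) :=
  clos_refl_sym_trans _ (@reparam_step X).

(* The relation f <= g on traces, via representatives:
   g = u * f * v for some dipaths u, v (composable). *)
Definition trace_le (X : Type) (dX : set (R -> X)) (f g : R -> X) : Prop :=
  exists u v, dX u /\ dX v /\ u 1 = f 0 /\ f 1 = v 0 /\
    same_trace g (concat (concat u f) v).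

Definition trace_preorder (X : Type) (dX : set (R -> X)) : Prop :=
  (forall f f' g g', dX f -> dX f' -> dX g -> dX g' ->
     same_trace f f' -> same_trace g g' -> trace_le dX f g -> trace_le dX f' g')
  /\ (forall f, dX f -> trace_le dX f f)
  /\ (forall f g h, dX f -> dX g -> dX h ->
        trace_le dX f g -> trace_le dX g h -> trace_le dX f h).

Definition trace_porder (X : Type) (dX : set (R -> X)) : Prop :=
  trace_preorder dX /\
  (forall f g, dX f -> dX g -> trace_le dX f g -> trace_le dX g f ->
     same_trace f g).

Definition pospace (X : topologicalType) (le : X -> X -> Prop) : Prop :=
  hausdorff_space X /\
  (forall x, le x x) /\
  (forall x y, le x y -> le y x -> x = y) /\
  (forall x y z, le x y -> le y z -> le x z) /\
  closed [set z : X * X | le z.1 z.2].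

Definition pos_dipaths (X : topologicalType) (le : X -> X -> Prop)
  : set (R -> X) :=
  [set p | is_path p /\
     forall s t, I01 s -> I01 t -> s <= t -> le (p s) (p t)].

End DirectedSpaces.

From mathcomp Require Import all_boot all_order all_algebra.
From mathcomp Require Import all_classical all_reals all_analysis.
From mathcomp Require Import lra.
From Stdlib Require Import Relations.
Set Implicit Arguments. Unset Strict Implicit. Unset Printing Implicit Defensive.
Import Order.TTheory GRing.Theory Num.Theory numFieldNormedType.Exports.
Local Open Scope classical_set_scope.
Local Open Scope ring_scope.

(* Concatenation of dipaths is, up to reparametrization, associative,
   compatible with reparametrization of either factor, and has constant paths
   as units; each fact is witnessed by an explicit piecewise-linear
   reparametrization of [0,1]. Hence [f <= g] does not depend on the chosen
   representatives, is reflexive (pad [f] with constant paths) and transitive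
   (absorb the padding of [u' * (u * f * v) * v'] into [u' * u] and [v * v']).
   In a pospace, if [g = u * f * v] and [f = u' * g * v'], antisymmetry forces
   [f] and [g] to have the same endpoints, so [u] and [v] are increasing loops,
   hence constant, and [g] is [f] up to reparametrization. *)

Lemma continuous_within_comp (Y Z W : topologicalType) (A : set Y) (B : set Z)
    (g : Y -> Z) (f : Z -> W) :
  {within A, continuous g} -> (forall x, A x -> B (g x)) ->
  {within B, continuous f} -> {within A, continuous (f \o g)}.
Proof.
move=> /subspace_continuousP cg gAB /subspace_continuousP cf.
apply/subspace_continuousP => x Ax.
apply: cvg_comp (cf _ (gAB x Ax)) => P /(cg x Ax).
rewrite /= nbhs_simpl /= /within /= nbhs_simpl /=.
by apply: filterS => y Py Ay; exact: Py Ay (gAB _ Ay).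
Qed.

Section Paths.
Variable R : realType.
Implicit Types (s t a b : R) (phi psi : R -> R).

Lemma I01P t : I01 t <-> 0 <= t <= 1.
Proof. by rewrite /I01 /= in_itv. Qed.

Lemma I01_in t : 0 <= t <= 1 -> I01 t.
Proof. by move/I01P. Qed.

Lemma I01_0 : I01 (0 : R). Proof. by apply/I01P; rewrite lexx ler01. Qed.
Lemma I01_1 : I01 (1 : R). Proof. by apply/I01P; rewrite lexx ler01. Qed.

Lemma concat0 (X : Type) (p q : R -> X) : concat p q 0 = p 0.
Proof. by rewrite /concat ifT ?mulr0 // invr_ge0 ler0n. Qed.

Lemma concat1 (X : Type) (p q : R -> X) : concat p q 1 = q 1.
Proof. by rewrite /concat ifF; [congr q; lra | apply/negbTE; rewrite -ltNge; lra]. Qed.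

Lemma affine_continuous a b : continuous (fun t : R => t * a + b).
Proof.
move=> t; apply: (@continuousD _ _ _ (fun t : R => t * a) (fun _ => b)).
  exact: mulrr_continuous.
exact: cst_continuous.
Qed.

Lemma I01_split : @I01 R = `[0, 2^-1] `|` `[2^-1, 1].
Proof.
apply/seteqP; split => t.
  move=> /I01P/andP[? ?] /=; rewrite !in_itv /=.
  by case: (lerP t (2^-1)) => h; [left | right]; apply/andP; split; lra.
by rewrite /= !in_itv /= => -[] /andP[? ?]; apply/I01P/andP; split; lra.
Qed.

Lemma is_path_concat (X : topologicalType) (p q : R -> X) :
  is_path p -> is_path q -> p 1 = q 0 -> is_path (concat p q).
Proof.
rewrite /is_path => cp cq pq; rewrite I01_split.
apply: withinU_continuous; try exact: itv_closed.
  apply: (@subspace_eq_continuous _ _ _ (p \o (fun t => t * 2 + 0))).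
    move=> t; rewrite inE /= in_itv /= => /andP[_ h].
    by rewrite /from_subspace /concat h addr0 mulrC.
  apply: continuous_within_comp cp; first exact/continuous_subspaceT/affine_continuous.
  by move=> t; rewrite /= in_itv /= => /andP[? ?]; apply/I01P/andP; split; lra.
apply: (@subspace_eq_continuous _ _ _ (q \o (fun t => t * 2 + (-1)))).
  move=> t; rewrite inE /= in_itv /= => /andP[? ?]; rewrite /from_subspace /concat /=.
  case: (lerP t (2^-1)) => h; last by rewrite mulrC.
  have -> : t = 2^-1 by lra.
  have -> : 2 * 2^-1 = 1 :> R by lra.
  by rewrite pq; congr q; lra.
apply: continuous_within_comp cq; first exact/continuous_subspaceT/affine_continuous.
by move=> t; rewrite /= in_itv /= => /andP[? ?]; apply/I01P/andP; split; lra.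
Qed.

Section OrderedPaths.
Variables (X : topologicalType) (le : X -> X -> Prop).

Lemma pos_dipaths_cst (x : X) : (forall y, le y y) -> pos_dipaths le (fun _ : R => x).
Proof.
move=> leX_refl; split=> [|*]; last exact: leX_refl.
exact/continuous_subspaceT/cst_continuous.
Qed.

Lemma pos_dipaths_concat (p q : R -> X) :
  (forall x y z, le x y -> le y z -> le x z) ->
  pos_dipaths le p -> pos_dipaths le q -> p 1 = q 0 -> pos_dipaths le (concat p q).
Proof.
move=> leX_trans [cp mp] [cq mq] pq; split; first exact: is_path_concat.
move=> s t /I01P/andP[s0 s1] /I01P/andP[t0 t1] st; rewrite /concat.
case: (leP s (2^-1)) => hs; case: (leP t (2^-1)) => ht.
- by apply: mp; try apply: I01_in; lra.
- apply: (leX_trans _ (p 1)); first by apply: mp; try apply: I01_in; lra.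
  by rewrite pq; apply: mq; try apply: I01_in; lra.
- by have := lt_le_trans hs (le_trans st ht); rewrite ltxx.
- by apply: mq; try apply: I01_in; lra.
Qed.

Lemma pos_dipath_loop_const (p : R -> X) :
  (forall x y, le x y -> le y x -> x = y) ->
  pos_dipaths le p -> p 1 = p 0 -> forall t, I01 t -> p t = p 0.
Proof.
move=> leX_anti [_ mp] p10 t It; have /I01P/andP[t0 t1] := It.
apply: leX_anti; last exact: mp I01_0 It t0.
by rewrite -p10; apply: mp It I01_1 t1.
Qed.

End OrderedPaths.

Local Notation nondecr_path := (@pos_dipaths R _ (fun s t : R => s <= t)).

Lemma nondecr_path_id : nondecr_path id.
Proof. by split=> //; apply: continuous_subspaceT => ?; exact: cvg_id. Qed.

Lemma nondecr_path_cst c : nondecr_path (fun=> c).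
Proof. exact: pos_dipaths_cst. Qed.

Lemma nondecr_path_concat phi psi : nondecr_path phi -> nondecr_path psi ->
  phi 1 = psi 0 -> nondecr_path (concat phi psi).
Proof. by apply: pos_dipaths_concat => ? ? ?; exact: le_trans. Qed.

Lemma nondecr_path_affine phi a b : nondecr_path phi -> 0 <= a ->
  nondecr_path (fun s => (phi s + b) * a).
Proof.
move=> [cphi mphi] a0; split=> [|s t Is It st]; last by rewrite ler_wpM2r // lerD2r mphi.
have affine_cont : {within setT, continuous (fun x : R => (x + b) * a)}.
  by apply/continuous_subspaceT; under eq_fun do rewrite mulrDl; exact: affine_continuous.
exact: (continuous_within_comp cphi (fun _ _ => I) affine_cont).
Qed.

Lemma nondecr_path_scale phi a : nondecr_path phi -> 0 <= a ->
  nondecr_path (fun s => phi s * a).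
Proof.
rewrite (_ : (fun s => phi s * a) = (fun s => (phi s + 0) * a)).
  exact: nondecr_path_affine.
by apply/funext => s; rewrite addr0.
Qed.

Lemma nondecr_path_line a b : 0 <= a -> nondecr_path (fun s => (s + b) * a).
Proof. exact: (nondecr_path_affine (phi := id)) nondecr_path_id. Qed.

Lemma reparam_I01 phi t : reparam phi -> I01 t -> I01 (phi t).
Proof. by move=> [_ [_ im]] It; rewrite -im; exists t. Qed.

Lemma reparamP phi : reparam phi <-> [/\ nondecr_path phi, phi 0 = 0 & phi 1 = 1].
Proof.
split=> [phiR | [[cphi mphi] phi0 phi1]].
  have [cphi [mphi im]] := phiR.
  have [s0 Is0 phis0] : (phi @` @I01 R) 0 by rewrite im; exact: I01_0.
  have [s1 Is1 phis1] : (phi @` @I01 R) 1 by rewrite im; exact: I01_1.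
  have /I01P/andP[+ _] := reparam_I01 phiR I01_0.
  have /I01P/andP[_ +] := reparam_I01 phiR I01_1.
  have /I01P/andP[s0_ge0 _] := Is0; have /I01P/andP[_ s1_le1] := Is1.
  have := mphi _ _ I01_0 Is0 s0_ge0; have := mphi _ _ Is1 I01_1 s1_le1.
  by rewrite phis0 phis1 => ? ? ? ?; split=> //; lra.
do 2 split => //; apply/seteqP; split=> [_ [t It <-] | y /I01P Iy].
  have /I01P/andP[t0 t1] := It; apply/I01P/andP; split.
    by rewrite -phi0; apply: mphi I01_0 It t0.
  by rewrite -phi1; apply: mphi It I01_1 t1.
have [|t t01 <-] := @IVT R phi 0 1 y ler01 cphi; last by exists t.
by rewrite phi0 phi1 /Num.min /Num.max ltr01.
Qed.

Lemma reparam_concat phi psi : nondecr_path phi -> nondecr_path psi ->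
  phi 0 = 0 -> phi 1 = psi 0 -> psi 1 = 1 -> reparam (concat phi psi).
Proof.
move=> phiP psiP phi0 phipsi psi1; apply/reparamP.
by split; rewrite ?concat0 ?concat1 //; exact: nondecr_path_concat.
Qed.

Lemma reparam_id : reparam (@id R).
Proof. by apply/reparamP; split => //; exact: nondecr_path_id. Qed.

Lemma reparam_concat_halves phi psi : reparam phi -> reparam psi ->
  reparam (concat (fun s => phi s / 2) (fun s => (psi s + 1) / 2)).
Proof.
move=> /reparamP[phiP phi0 phi1] /reparamP[psiP psi0 psi1].
apply: reparam_concat; rewrite ?phi0 ?phi1 ?psi0 ?psi1; try lra.
  by apply: nondecr_path_scale phiP _; lra.
by apply: nondecr_path_affine psiP _; lra.
Qed.

End Paths.

Section ReparamSteps.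
Variables (R : realType) (X : Type).
Implicit Types (p q r u v f : R -> X).

Lemma reparam_step_concat_cst f u v :
  (forall t, I01 t -> u t = f 0) -> (forall t, I01 t -> v t = f 1) ->
  reparam_step f (concat (concat u f) v).
Proof.
move=> u_cst v_cst; exists (concat (concat (fun=> 0) id) (fun=> 1)); split.
  apply: reparam_concat; rewrite ?concat0 ?concat1 //; last exact: nondecr_path_cst.
  by apply: nondecr_path_concat; [exact: nondecr_path_cst | exact: nondecr_path_id |].
move=> t /I01P/andP[t0 t1]; rewrite /concat; repeat case: leP => ?.
- by rewrite u_cst //; apply: I01_in; lra.
- by [].
- by rewrite v_cst //; apply: I01_in; lra.
Qed.

Lemma reparam_step_concatl p q r :
  reparam_step p q -> reparam_step (concat p r) (concat q r).
Proof.
move=> [phi [phiR qp]]; exists (concat (fun s => phi s / 2) (fun s => (s + 1) / 2)).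
split; first exact: reparam_concat_halves phiR (reparam_id R).
move=> t /I01P/andP[t0 t1]; rewrite /concat; case: (leP t (2^-1)) => ht.
  have It2 : I01 (2 * t) by apply: I01_in; lra.
  have /I01P/andP[? ?] := reparam_I01 phiR It2.
  by rewrite qp //; case: leP => ?; [congr p | exfalso]; lra.
by case: leP => ?; [exfalso | congr r]; lra.
Qed.

Lemma reparam_step_concatr p q r : r 1 = p 0 ->
  reparam_step p q -> reparam_step (concat r p) (concat r q).
Proof.
move=> rp [phi [phiR qp]]; exists (concat (fun s => s / 2) (fun s => (phi s + 1) / 2)).
split; first exact: reparam_concat_halves (reparam_id R) phiR.
move=> t /I01P/andP[t0 t1]; move: rp; rewrite /concat; case: (leP t (2^-1)) => ht.
  by move=> _; case: leP => ?; [congr r | exfalso]; lra.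
have It2 : I01 (2 * t - 1) by apply: I01_in; lra.
have /I01P/andP[? ?] := reparam_I01 phiR It2.
rewrite qp //; case: leP => ?; last by move=> _; congr p; lra.
have -> : phi (2 * t - 1) = 0 by lra.
by move=> <-; congr r; lra.
Qed.

Lemma reparam_step_concatA p q r :
  reparam_step (concat p (concat q r)) (concat (concat p q) r).
Proof.
(* sends the breakpoints 1/4 and 1/2 of (p * q) * r to 1/2 and 3/4 *)
exists (concat (concat (fun s => s / 2) (fun s => (s + 2) / 4)) (fun s => (s + 3) / 4)).
split.
  apply: reparam_concat; rewrite ?concat0 ?concat1; try lra.
    apply: nondecr_path_concat; try lra; last by apply: nondecr_path_line; lra.
    by apply: nondecr_path_scale (nondecr_path_id _) _; lra.
  by apply: nondecr_path_line; lra.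
move=> t /I01P/andP[t0 t1]; rewrite /concat; repeat case: leP => ?;
  by [exfalso; lra | congr p; lra | congr q; lra | congr r; lra].
Qed.

End ReparamSteps.

Section Traces.
Variables (R : realType) (X : Type).
Implicit Types (p q r u v f g h : R -> X).

Lemma same_trace_sym p q : same_trace p q -> same_trace q p.
Proof. exact: rst_sym. Qed.

Lemma same_trace_trans p q r : same_trace p q -> same_trace q r -> same_trace p r.
Proof. exact: rst_trans. Qed.

Lemma same_trace_ends p q : same_trace p q -> p 0 = q 0 /\ p 1 = q 1.
Proof.
elim=> {p q} [p q [phi [phiR qp]]|//|p q _ [-> ->]//|p q r _ [-> ->] _ [-> ->]//].
by have /reparamP[_ phi0 phi1] := phiR; rewrite !qp ?phi0 ?phi1 //; [exact: I01_1 | exact: I01_0].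
Qed.

Lemma same_trace_concatl p p' r :
  same_trace p p' -> same_trace (concat p r) (concat p' r).
Proof.
elim=> {p p'} [p q /reparam_step_concatl|p|p q _|p q s _ pq _ qs].
- by move=> /(_ r); apply: rst_step.
- exact: rst_refl.
- exact: same_trace_sym.
- exact: same_trace_trans pq qs.
Qed.

Lemma same_trace_concatr p p' r : r 1 = p 0 ->
  same_trace p p' -> same_trace (concat r p) (concat r p').
Proof.
move=> + pp'; elim: pp' => {p p'} [p q pq rp|p _|p q pq IH rp|p q s pq IHpq _ IHqs rp].
- exact/rst_step/reparam_step_concatr.
- exact: rst_refl.
- by apply/same_trace_sym/IH; rewrite rp; case: (same_trace_ends pq).
- apply: same_trace_trans (IHpq rp) (IHqs _).
  by rewrite rp; case: (same_trace_ends pq).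
Qed.

Lemma same_trace_concatA p q r :
  same_trace (concat (concat p q) r) (concat p (concat q r)).
Proof. exact/same_trace_sym/rst_step/reparam_step_concatA. Qed.

End Traces.

Section TraceOrder.
Variables (R : realType) (X : Type) (dX : set (R -> X)).
Hypothesis dX_cst : forall x : X, dX (fun _ => x).
Hypothesis dX_concat : forall p q, dX p -> dX q -> p 1 = q 0 -> dX (concat p q).
Implicit Types (f g h : R -> X).

Lemma trace_le_same_trace f f' g g' :
  same_trace f f' -> same_trace g g' -> trace_le dX f g -> trace_le dX f' g'.
Proof.
move=> ff' gg' [u [v [du [dv [uf [fv g_ufv]]]]]].
have [f0 f1] := same_trace_ends ff'.
exists u, v; do 2 split => //; rewrite -f0 -f1; do 2 split => //.
apply: same_trace_trans (same_trace_sym gg') (same_trace_trans g_ufv _).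
by apply/same_trace_concatl/same_trace_concatr.
Qed.

Lemma trace_le_refl f : trace_le dX f f.
Proof.
exists (fun _ => f 0), (fun _ => f 1); do 4 split => //.
exact/rst_step/reparam_step_concat_cst.
Qed.

Lemma trace_le_trans f g h : trace_le dX f g -> trace_le dX g h -> trace_le dX f h.
Proof.
move=> [u [v [du [dv [uf [fv g_ufv]]]]]] [u' [v' [du' [dv' [u'g [gv' h_ugv]]]]]].
have [] := same_trace_ends g_ufv; rewrite concat0 concat0 concat1 => g0 g1.
exists (concat u' u), (concat v v'); split; first by apply: dX_concat; rewrite // u'g.
split; first by apply: dX_concat; rewrite // -g1.
rewrite concat1 concat0; do 2 split => //.
apply: same_trace_trans h_ugv _.
apply: same_trace_trans (same_trace_concatl _ (same_trace_concatr u'g g_ufv)) _.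
apply: same_trace_trans (same_trace_concatA _ _ _) _.
apply: same_trace_trans (same_trace_concatr _ (same_trace_concatA _ _ _)) _.
  by rewrite !concat0 u'g g0.
apply: same_trace_trans (same_trace_sym (same_trace_concatA _ _ _)) _.
exact/same_trace_concatl/same_trace_sym/same_trace_concatA.
Qed.

Lemma concat_closed_trace_preorder : trace_preorder dX.
Proof.
split; last split.
- by move=> f f' g g' _ _ _ _; exact: trace_le_same_trace.
- by move=> f _; apply: trace_le_refl.
- by move=> f g h _ _ _; apply: trace_le_trans.
Qed.

End TraceOrder.

Section Pospaces.
Variables (R : realType) (X : topologicalType) (le : X -> X -> Prop).
Hypothesis leX_anti : forall x y, le x y -> le y x -> x = y.
Local Notation dipath := (@pos_dipaths R X le).

Lemma pos_dipath_le_ends p : dipath p -> le (p 0) (p 1).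
Proof. by move=> [_ mp]; exact: mp _ _ (I01_0 _) (I01_1 _) ler01. Qed.

Lemma pos_trace_le_antisym f g :
  trace_le dipath f g -> trace_le dipath g f -> same_trace f g.
Proof.
move=> [u [v [du [dv [uf [fv g_ufv]]]]]] [u' [v' [du' [dv' [u'g [gv' f_ugv]]]]]].
have [] := same_trace_ends g_ufv; rewrite concat0 concat0 concat1 => g0 g1.
have [] := same_trace_ends f_ugv; rewrite concat0 concat0 concat1 => f0 f1.
have fg0 : f 0 = g 0.
  by apply: leX_anti; [rewrite f0 -u'g | rewrite g0 -uf]; exact: pos_dipath_le_ends.
have fg1 : f 1 = g 1.
  by apply: leX_anti; [rewrite fv g1 | rewrite gv' f1]; exact: pos_dipath_le_ends.
have u_cst : forall t, I01 t -> u t = f 0.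
  by move=> t It; rewrite fg0 g0 (pos_dipath_loop_const leX_anti du) // uf fg0.
have v_cst : forall t, I01 t -> v t = f 1.
  by move=> t It; rewrite fv (pos_dipath_loop_const leX_anti dv) // -fv fg1.
exact/(same_trace_trans _ (same_trace_sym g_ufv))/rst_step/reparam_step_concat_cst.
Qed.

End Pospaces.

Theorem lemma5p1 (R : realType) :
  (forall (X : topologicalType) (dX : set (R -> X)),
      dspace dX -> trace_preorder dX) /\
  (forall (X : topologicalType) (le : X -> X -> Prop),
      pospace le -> trace_porder (@pos_dipaths R X le)).
Proof.
split=> [X dX [_ dX_cst _ dX_concat] | X le [_ [leX_refl [leX_anti [leX_trans _]]]]].
  exact: concat_closed_trace_preorder.
split=> [|f g _ _]; last exact: pos_trace_le_antisym.
apply: concat_closed_trace_preorder => [x | p q]; first exact: pos_dipaths_cst.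
exact: pos_dipaths_concat.
Qed.
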